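(* Let $G\le\mathrm{Aut}(\mathcal{T}_d)$ be any self-similar group. Then every non-trivial element of the Röver–Nekrashevych group $V_d(G)$ has infinitely many $F_d$-conjugates; equivalently, the inclusion $L(F_d)\subseteq L(V_d(G))$ is irreducible.
   Context: Fix $d\ge2$. $\mathcal{T}_d$ is the infinite rooted $d$-regular tree with vertex set $\{1,\dots,d\}^*$ (finite words, root the empty word), $w$ adjacent to $wi$. Every automorphism permutes the level-1 vertices, giving $\rho:\mathrm{Aut}(\mathcal{T}_d)\to S_d$. Let $\mathcal{T}_d(i)$ be the subtree spanned by words $iw$ and $\delta_i:\mathcal{T}_d\to\mathcal{T}_d(i)$, $w\mapsto iw$. For $g\in\mathrm{Aut}(\mathcal{T}_d)$ put $\phi_i(g)=\delta^{-1}_{\rho(g)i}\circ g|_{\mathcal{T}_d(i)}\circ\delta_i$. $G\le\mathrm{Aut}(\mathcal{T}_d)$ is self-similar if $\phi_i(G)\subseteq G$ for all $i$. Let $C_d=\{1,\dots,d\}^{\mathbb{N}}$, and for $w\in\{1,\dots,d\}^*$ let $C_d(w)=\{w\kappa:\kappa\in C_d\}$ with homeomorphism $h_w:C_d\to C_d(w)$, $\kappa\mapsto w\kappa$. $V_d(G)$ is the group of homeomorphisms of $C_d$ obtained by choosing two partitions of $C_d$ into the same number $n$ of cones $C_d(w_1^+),\dots,C_d(w_n^+)$ and $C_d(w_1^-),\dots,C_d(w_n^-)$, a bijection $i\mapsto j(i)$, and $g_1,\dots,g_n\in G$, and mapping $C_d(w_i^+)$ to $C_d(w_{j(i)}^-)$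 via $h_{w_{j(i)}^-}\circ g_i\circ h_{w_i^+}^{-1}$. $F_d\le V_d(G)$ is the subgroup of such homeomorphisms with all $g_i=1$ that preserve the lexicographic order of $C_d$. An inclusion $N\subseteq M$ of von Neumann algebras is irreducible if $N'\cap M\subseteq N$. $L(G)$ is the group von Neumann algebra. *)

From mathcomp Require Import all_boot.
From mathcomp Require Import boolp classical_sets cardinality.
Set Implicit Arguments. Unset Strict Implicit. Unset Printing Implicit Defensive.

Section Defs.
Variable d : nat.

(* Letters {1,...,d} are represented by 'I_d = {0,...,d-1}. *)
Definition letter := 'I_d.
Definition word := seq letter.            (* vertices of T_d, root = [::] *)
Definition cantor := nat -> letter.

Definition tree_adj (u v : word) : Prop :=
  exists i : letter, v = rcons u i \/ u = rcons v i.

Definition tree_aut (f : word -> word) : Prop :=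
  bijective f /\ f [::] = [::] /\
  (forall u v, tree_adj (f u) (f v) <-> tree_adj u v).

Definition is_aut_subgroup (G : (word -> word) -> Prop) : Prop :=
  (forall g, G g -> tree_aut g) /\
  G id /\
  (forall g h, G g -> G h -> G (g \o h)) /\
  (forall g, G g -> exists h, G h /\ cancel g h /\ cancel h g).

(* phi_i(g) = delta_{rho(g) i}^{-1} o g|_{T_d(i)} o delta_i ; delta_i w = i w,
   and delta^{-1} strips the first letter. *)
Definition section (g : word -> word) (i : letter) : word -> word :=
  fun w => behead (g (i :: w)).

Definition self_similar (G : (word -> word) -> Prop) : Prop :=
  is_aut_subgroup G /\ forall g i, G g -> G (section g i).

Definition cprefix (k : cantor) (m : nat) : word := mkseq k m.

Definition bact (g : word -> word) (k : cantor) : cantor :=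
  fun n => last (k 0) (g (cprefix k n.+1)).

Definition hcone (w : word) (k : cantor) : cantor :=
  fun n => if n < size w then nth (k 0) w n else k (n - size w).

Definition in_cone (w : word) (k : cantor) : Prop := cprefix k (size w) = w.

Definition cone_partition (n : nat) (ws : 'I_n -> word) : Prop :=
  forall k : cantor, exists! i : 'I_n, in_cone (ws i) k.

Definition V_data (G : (word -> word) -> Prop) (x : cantor -> cantor)
  (n : nat) (wp wm : 'I_n -> word) (j : 'I_n -> 'I_n) (g : 'I_n -> word -> word) :
  Prop :=
  cone_partition wp /\ cone_partition wm /\ bijective j /\
  (forall i, G (g i)) /\
  (forall i (k : cantor), x (hcone (wp i) k) = hcone (wm (j i)) (bact (g i) k)).

Definition in_V (G : (word -> word) -> Prop) (x : cantor -> cantor) : Prop :=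
  exists n wp wm j g, @V_data G x n wp wm j g.

Definition lex_lt (k1 k2 : cantor) : Prop :=
  exists m, (forall i, i < m -> k1 i = k2 i) /\ (k1 m < k2 m)%N.

Definition in_F (G : (word -> word) -> Prop) (x : cantor -> cantor) : Prop :=
  (exists n wp wm j, @V_data G x n wp wm j (fun _ => id)) /\
  (forall k1 k2, lex_lt k1 k2 -> lex_lt (x k1) (x k2)).

Definition F_conjugates (G : (word -> word) -> Prop) (x : cantor -> cantor)
  : set (cantor -> cantor) :=
  [set y | exists f finv, in_F G f /\ cancel f finv /\ cancel finv f /\
                          y = f \o x \o finv].

End Defs.

From mathcomp Require Import all_boot.
From mathcomp Require Import boolp classical_sets cardinality.
Set Implicit Arguments. Unset Strict Implicit. Unset Printing Implicit Defensive.

(* A non-trivial x in V_d(G) is injective and continuous, hence moves some cone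
   C(u) off itself.  Let f_t in F_d act as a fixed non-trivial element psi of
   F_d on the cone C(u 0^t) and as the identity elsewhere.  As f_t is supported
   in C(u) and x(C(u)) misses C(u), the conjugate f_t x f_t^-1 agrees with
   x f_t^-1 on C(u); injectivity of x recovers f_t^-1 from the conjugate, and
   the f_t are pairwise distinct. *)

Lemma count_eq1_nth (T : eqType) (pr : pred T) x0 (s : seq T) : count pr s = 1 ->
  exists i, [/\ i < size s, pr (nth x0 s i) &
                forall j, j < size s -> pr (nth x0 s j) -> j = i].
Proof.
elim: s => [|a s IH] //=; case pra: (pr a) => /=.
  case=> /eqP s0; exists 0; split => // -[|j] //= ltjs prj.
  move: s0; rewrite -leqn0 leqNgt -has_count; case/hasP.
  by exists (nth x0 s j); rewrite ?mem_nth.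
case/IH => i [ltis pri iu]; exists i.+1; split => // -[|j] /=; first by rewrite pra.
by move=> ltjs /(iu _ ltjs) ->.
Qed.

Lemma count_pred_letter d (F : pred (letter d)) a :
  (forall b, F b -> b = a) -> count F (enum 'I_d) = F a.
Proof.
move=> Fa; rewrite (eq_count (a2 := fun b => F a && (b == a))); last first.
  move=> b /=; case: (eqVneq b a) => [->|ba]; first by rewrite andbT.
  by rewrite andbF; apply/negP => /Fa /eqP; rewrite (negbTE ba).
case: (F a); last by rewrite count_pred0.
by have := count_uniq_mem a (enum_uniq 'I_d); rewrite mem_enum.
Qed.

Lemma count_pred_letter_filter d (F P : pred (letter d)) a :
  (forall b, F b -> b = a) -> count F [seq b <- enum 'I_d | P b] = F a && P a.
Proof.
by move=> Fa; rewrite count_filter (count_pred_letter (a := a)) // => b /andP [/Fa].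
Qed.

Section Cones.
Variable d : nat.
Implicit Types (a c : letter d) (k p q : cantor d) (s u v w : word d).

Definition cbehead k : cantor d := fun t => k t.+1.
Definition cdrop m k : cantor d := fun t => k (t + m).
Definition ccons a k : cantor d := fun t => if t is t'.+1 then k t' else a.
Definition incone w k : bool := cprefix k (size w) == w.

Lemma inconeP w k : reflect (in_cone w k) (incone w k).
Proof. exact: eqP. Qed.

Lemma ccons_behead k : ccons (k 0) (cbehead k) = k.
Proof. by apply: funext => -[|t]. Qed.

Lemma cbehead_ccons a k : cbehead (ccons a k) = k.
Proof. by []. Qed.

Lemma hcone_nil k : hcone [::] k = k.
Proof. by apply: funext => t; rewrite /hcone ltn0 subn0. Qed.

Lemma hcone_cons a w k : hcone (a :: w) k = ccons a (hcone w k).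
Proof. by apply: funext => -[|t] //; rewrite /hcone /= ltnS subSS. Qed.

Lemma cprefixS k m : cprefix k m.+1 = k 0 :: cprefix (cbehead k) m.
Proof. by rewrite /cprefix /mkseq /= -(addn0 1) iotaDl -map_comp. Qed.

Lemma incone_cons a w k : incone (a :: w) k = (k 0 == a) && incone w (cbehead k).
Proof. by rewrite /incone /= cprefixS eqseq_cons. Qed.

Lemma incone_catl u s k : incone (u ++ s) k -> incone u k.
Proof.
by elim: u k => [|a u IH] k //=; rewrite !incone_cons => /andP [-> /IH].
Qed.

Lemma incone_hcone_cat w s q : incone (w ++ s) (hcone w q) = incone s q.
Proof.
elim: w => [|a w IH] /=; first by rewrite hcone_nil.
by rewrite hcone_cons incone_cons /= eqxx IH.
Qed.

Lemma incone_hcone w q : incone w (hcone w q).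
Proof. by have := incone_hcone_cat w [::] q; rewrite cats0. Qed.

Lemma hcone_inj w : injective (hcone w).
Proof.
elim: w => [|a w IH] k1 k2; first by rewrite !hcone_nil.
by rewrite !hcone_cons => /(congr1 cbehead) /IH.
Qed.

Lemma incone_hconeE w k : incone w k -> k = hcone w (cdrop (size w) k).
Proof.
elim: w k => [|a w IH] k.
  by move=> _; rewrite hcone_nil; apply: funext => t; rewrite /cdrop addn0.
rewrite incone_cons => /andP [/eqP k0 /IH kE].
rewrite hcone_cons -{1}(ccons_behead k) k0; congr ccons.
by rewrite {1}kE; congr hcone; apply: funext => t; rewrite /cdrop /cbehead /= addnS.
Qed.

Lemma incone_cprefixP p k m :
  reflect (forall t, t < m -> p t = k t) (incone (cprefix k m) p).
Proof.
rewrite /incone size_mkseq; apply: (iffP eqP) => [pk t tm | pk].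
  by have := congr1 (nth (p 0) ^~ t) pk; rewrite !nth_mkseq.
by apply/eq_in_map => t; rewrite mem_iota => /pk.
Qed.

Lemma bact_id k : bact id k = k.
Proof. by apply: funext => t; rewrite /bact /cprefix mkseqS last_rcons. Qed.

Lemma bact_agree (g : word d -> word d) k1 k2 l :
  (forall t, t <= l -> k1 t = k2 t) -> bact g k1 l = bact g k2 l.
Proof.
move=> k12; rewrite /bact k12 //.
by congr (last _ (g _)); apply/eq_in_map => t; rewrite mem_iota /= => /k12.
Qed.

Lemma tree_aut_rcons (g : word d -> word d) : tree_aut g ->
  forall w i, exists j, g (rcons w i) = rcons (g w) j.
Proof.
move=> [/bij_inj g_inj [g0 g_adj]].
elim/last_ind => [|w i' IH] i.
  have : tree_adj (g [::]) (g [:: i]) by apply/g_adj; exists i; left.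
  rewrite g0 => -[j [->|/(congr1 size)]]; first by exists j.
  by rewrite size_rcons.
have : tree_adj (g (rcons w i')) (g (rcons (rcons w i') i)).
  by apply/g_adj; exists i; left.
move=> [j [->|]]; first by exists j.
have [j' ->] := IH i'; move=> /rcons_inj [/g_inj /(congr1 size) + _].
by rewrite !size_rcons => /eqP; rewrite ltn_eqF.
Qed.

Lemma cprefix_bact (g : word d -> word d) : tree_aut g ->
  forall k t, cprefix (bact g k) t = g (cprefix k t).
Proof.
move=> g_aut k; elim => [|t IH]; first by case: g_aut => _ [-> _].
rewrite /cprefix !mkseqS -/(cprefix _ t) IH.
have [j gE] := tree_aut_rcons g_aut (cprefix k t) (k t).
rewrite /cprefix in gE; rewrite gE; congr rcons.
by rewrite /bact /cprefix mkseqS gE last_rcons.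
Qed.

Lemma bact_inj (g : word d -> word d) : tree_aut g -> injective (bact g).
Proof.
move=> g_aut k1 k2 k12; apply: funext => t.
have : cprefix k1 t.+1 = cprefix k2 t.+1.
  case: g_aut (g_aut) => /bij_inj g_inj _ g_aut.
  by apply: g_inj; rewrite -!cprefix_bact // k12.
by move/(congr1 (nth (k1 0) ^~ t)); rewrite !nth_mkseq.
Qed.

Lemma lex_lt_inv k1 k2 : lex_lt k1 k2 ->
  k1 0 < k2 0 \/ k1 0 = k2 0 /\ lex_lt (cbehead k1) (cbehead k2).
Proof.
case=> -[|m] [k12 lt12]; first by left.
by right; split; [exact: k12 | exists m; split => // i im; apply: k12].
Qed.

Lemma lex_lt_head k1 k2 : k1 0 < k2 0 -> lex_lt k1 k2.
Proof. by exists 0. Qed.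

Lemma lex_lt_behead k1 k2 :
  k1 0 = k2 0 -> lex_lt (cbehead k1) (cbehead k2) -> lex_lt k1 k2.
Proof. by move=> k12 [m [eq12 lt12]]; exists m.+1; split => // -[|i] // /eq12. Qed.

Implicit Types (f h : cantor d -> cantor d) (P : seq (word d * word d)).

Definition on_cone1 c f k := if k 0 == c then ccons c (f (cbehead k)) else k.
Definition on_cone v f := foldr on_cone1 f v.

Lemma on_cone_hcone v f q : on_cone v f (hcone v q) = hcone v (f q).
Proof.
elim: v => [|c v IH] /=; first by rewrite !hcone_nil.
by rewrite !hcone_cons /on_cone1 /= eqxx cbehead_ccons IH.
Qed.

Lemma on_cone_out v f k : ~~ incone v k -> on_cone v f k = k.
Proof.
elim: v k => [|c v IH] k //=; rewrite incone_cons /on_cone1.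
by case: eqP => //= k0 /IH ->; rewrite -k0 ccons_behead.
Qed.

Lemma incone_on_cone v s f k : incone v (on_cone (v ++ s) f k) = incone v k.
Proof.
elim: v k => [|c v IH] k //=; rewrite /on_cone1.
by case: eqP => // k0; rewrite !incone_cons /= eqxx cbehead_ccons IH k0 eqxx.
Qed.

Lemma on_cone_can v f h : cancel f h -> cancel (on_cone v f) (on_cone v h).
Proof.
elim: v => [|c v IH] //= /IH fh k; rewrite /on_cone1.
case: (eqVneq (k 0) c) => [k0|]; last by move/negbTE ->.
by rewrite /= eqxx cbehead_ccons fh -k0 ccons_behead.
Qed.

Lemma on_cone_lex v f : (forall k1 k2, lex_lt k1 k2 -> lex_lt (f k1) (f k2)) ->
  forall k1 k2, lex_lt k1 k2 -> lex_lt (on_cone v f k1) (on_cone v f k2).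
Proof.
elim: v => [|c v IH] //= /IH f_lex k1 k2 /lex_lt_inv [lt12|[eq12 lt12]]; rewrite /on_cone1.
  case: eqP => [<-|k1c]; case: eqP => [k2c|k2c] //; apply: lex_lt_head => //=.
  - by move: lt12; rewrite k2c ltnn.
  - by rewrite -k2c.
rewrite eq12; case: eqP => // _; apply: lex_lt_behead => //; exact: f_lex.
Qed.

(* [P] lists pairs (w+, w-) of cones, each mapped onto the other by prefix
   replacement; the counting conditions say that both columns partition C_d. *)
Definition prefix_replacement P f :=
  [/\ forall k, count (incone^~ k) (map fst P) = 1,
      forall k, count (incone^~ k) (map snd P) = 1 &
      forall pq, pq \in P -> forall k, f (hcone pq.1 k) = hcone pq.2 k].

Lemma cone_partition_nth (s : seq (word d)) :
  (forall k, count (incone^~ k) s = 1) ->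
  cone_partition (fun i : 'I_(size s) => nth [::] s i).
Proof.
move=> s1 k; have [i [ltis ski iu]] := count_eq1_nth [::] (s1 k).
exists (Ordinal ltis); split => [|j skj]; first exact/inconeP.
by apply: val_inj; symmetry; apply: iu; [exact: ltn_ord | exact/inconeP].
Qed.

Lemma prefix_replacement_V_data (G : (word d -> word d) -> Prop) P f :
  G id -> prefix_replacement P f ->
  exists n wp wm j, @V_data d G f n wp wm j (fun _ => id).
Proof.
move=> Gid [P1 P2 Pf].
exists (size P), (fun i : 'I_(size P) => nth [::] (map fst P) i),
  (fun i : 'I_(size P) => nth [::] (map snd P) i), id.
split; first by have := cone_partition_nth P1; rewrite size_map.
split; first by have := cone_partition_nth P2; rewrite size_map.
split; first by exists id.
split => // i k; rewrite bact_id !(nth_map ([::], [::])) //.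
by apply: Pf; apply: mem_nth.
Qed.

Definition on_cone1_pairs c P :=
  [seq ([:: a], [:: a]) | a <- enum 'I_d & a != c] ++
  [seq (c :: pq.1, c :: pq.2) | pq <- P].

Lemma count_on_cone1_pairs c (s : seq (word d)) k :
  (forall k, count (incone^~ k) s = 1) ->
  count (incone^~ k) ([seq [:: a] | a <- enum 'I_d & a != c] ++ [seq c :: w | w <- s]) = 1.
Proof.
move=> s1; rewrite count_cat !count_map count_filter.
rewrite (count_pred_letter (a := k 0)); last first.
  by move=> a /andP [] /=; rewrite incone_cons andbT => /eqP.
rewrite /= incone_cons eqxx /=.
case: (eqVneq (k 0) c) => k0 /=.
  rewrite (eq_count (a2 := incone^~ (cbehead k))) ?s1 // => w /=.
  by rewrite incone_cons k0 eqxx.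
rewrite (eq_count (a2 := pred0)) ?count_pred0 // => w /=.
by rewrite incone_cons (negbTE k0).
Qed.

Lemma prefix_replacement_on_cone1 c P f :
  prefix_replacement P f -> prefix_replacement (on_cone1_pairs c P) (on_cone1 c f).
Proof.
move=> [P1 P2 Pf]; split => [k|k|].
- rewrite (_ : map fst _ = [seq [:: a] | a <- enum 'I_d & a != c] ++
                          [seq c :: w | w <- map fst P]).
    exact: count_on_cone1_pairs.
  by rewrite map_cat -!map_comp.
- rewrite (_ : map snd _ = [seq [:: a] | a <- enum 'I_d & a != c] ++
                          [seq c :: w | w <- map snd P]).
    exact: count_on_cone1_pairs.
  by rewrite map_cat -!map_comp.
move=> pq; rewrite mem_cat => /orP [/mapP [a + ->] | /mapP [pq' pq'P ->]] k /=.
  by rewrite mem_filter => /andP [ac _]; rewrite hcone_cons hcone_nil /on_cone1 /= (negbTE ac).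
by rewrite !hcone_cons /on_cone1 /= eqxx cbehead_ccons Pf.
Qed.

Lemma in_F_on_cone (G : (word d -> word d) -> Prop) v P f :
  G id -> prefix_replacement P f ->
  (forall k1 k2, lex_lt k1 k2 -> lex_lt (f k1) (f k2)) -> in_F G (on_cone v f).
Proof.
move=> Gid Pf f_lex; split; last exact: on_cone_lex.
apply: (prefix_replacement_V_data (P := foldr on_cone1_pairs P v)) => //.
by elim: v => [|c v IH] //=; apply: prefix_replacement_on_cone1.
Qed.

End Cones.

Definition cantor_continuous d (x : cantor d -> cantor d) :=
  forall k t, exists N, forall p, incone (cprefix k N) p -> x p t = x k t.

Lemma continuous_displaces_cone d (x : cantor d -> cantor d) :
  cantor_continuous x -> x <> id -> exists u, forall p, incone u p -> ~~ incone u (x p).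
Proof.
move=> x_cont x_neq_id.
have [k xk] : exists k, x k <> k.
  by apply/existsNP => x_id; apply: x_neq_id; apply: funext.
have [t xkt] : exists t, x k t <> k t by apply/existsNP => kt; apply: xk; apply: funext.
have [N xN] := x_cont k t.
exists (cprefix k (maxn N t.+1)) => p /incone_cprefixP pk; apply/incone_cprefixP => xpk.
apply: xkt; rewrite -(xpk t) ?leq_maxr // xN //.
by apply/incone_cprefixP => s sN; rewrite pk // leq_max sN.
Qed.

Section VData.
Variables (d : nat) (G : (word d -> word d) -> Prop) (x : cantor d -> cantor d).
Variables (n : nat) (wp wm : 'I_n -> word d) (j : 'I_n -> 'I_n).
Variable g : 'I_n -> word d -> word d.
Hypothesis Vx : V_data G x wp wm j g.

Lemma V_data_cone i p :
  incone (wp i) p -> x p = hcone (wm (j i)) (bact (g i) (cdrop (size (wp i)) p)).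
Proof. by case: Vx => _ [_ [_ [_ xE]]] /incone_hconeE pE; rewrite {1}pE xE. Qed.

Lemma V_data_continuous : cantor_continuous x.
Proof.
case: Vx => Pp _ k t; have [i [/inconeP ki _]] := Pp k.
exists (t.+1 + size (wp i)) => p /incone_cprefixP pk.
have pi : incone (wp i) p.
  rewrite -(eqP ki); apply/incone_cprefixP => s si.
  by rewrite pk // (leq_trans si) // leq_addl.
rewrite (V_data_cone pi) (V_data_cone ki) /hcone.
case: ifP => [tw|_]; first exact: set_nth_default.
apply: bact_agree => s st; rewrite /cdrop pk // -addSn leq_add2r.
by rewrite ltnS (leq_trans st) // leq_subr.
Qed.

Hypothesis g_aut : forall i, tree_aut (g i).

Lemma V_data_inj : injective x.
Proof.
case: Vx => Pp [Pm [/bij_inj j_inj _]] p1 p2 x12.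
have [i1 [/inconeP p1i _]] := Pp p1; have [i2 [/inconeP p2i _]] := Pp p2.
have i12 : i1 = i2.
  apply: j_inj; have [l [_ lu]] := Pm (x p1).
  rewrite -(lu (j i1)); last by apply/inconeP; rewrite (V_data_cone p1i) incone_hcone.
  by apply: lu; apply/inconeP; rewrite x12 (V_data_cone p2i) incone_hcone.
move: x12 p2i; rewrite -{}i12 => x12 p2i.
rewrite (incone_hconeE p1i) (incone_hconeE p2i); congr hcone.
apply: (bact_inj (g_aut i1)); apply: (@hcone_inj _ (wm (j i1))).
by rewrite -!V_data_cone.
Qed.

End VData.

Lemma on_cone_conj_eq d (x f1 f1' f2 f2' : cantor d -> cantor d) u s1 s2 :
  injective x -> (forall p, incone u p -> ~~ incone u (x p)) ->
  on_cone (u ++ s1) f1 \o x \o on_cone (u ++ s1) f1' =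
  on_cone (u ++ s2) f2 \o x \o on_cone (u ++ s2) f2' ->
  on_cone (u ++ s1) f1' = on_cone (u ++ s2) f2'.
Proof.
move=> x_inj xu conj12; apply: funext => p.
have out s f q : incone u q -> on_cone (u ++ s) f (x q) = x q.
  by move=> /xu xq; apply: on_cone_out; apply: contra xq; apply: incone_catl.
case: (boolP (incone u p)) => [pu|pu]; last first.
  by rewrite !on_cone_out //; apply: contra pu; apply: incone_catl.
apply: x_inj; have := congr1 (@^~ p) conj12 => /=.
by rewrite !out // incone_on_cone.
Qed.

Lemma infinite_set_inj T (A : set T) (y : nat -> T) :
  injective y -> (forall t, A (y t)) -> infinite_set A.
Proof.
move=> y_inj yA /(finite_preimage (fun a b _ _ => @y_inj a b)).
have -> : (y @^-1` A)%classic = setT by apply/seteqP; split => // t _; exact: yA.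
exact: infinite_nat.
Qed.

Section Generator.
Variable n : nat.
Local Notation D := n.+2.
Implicit Types (k p q : cantor D) (u v : word D).
Local Notation z := (ord0 : 'I_D).
Local Notation mx := (ord_max : 'I_D).

Lemma neq_ord_max_lt (b : 'I_D) : b != mx -> b < mx.
Proof. by rewrite -val_eqE /= ltn_neqAle -ltnS ltn_ord andbT. Qed.

Lemma neq_ord0_gt (b : 'I_D) : b != z -> z < b.
Proof. by rewrite -val_eqE /= lt0n. Qed.

(* The d-ary analogue of the generator x_0 of Thompson's group F; its cone
   picture is [psi_pairs]. *)
Definition psi k : cantor D :=
  if k 0 == z then (if k 1 == mx then ccons mx (ccons z (cbehead (cbehead k))) else cbehead k)
  else ccons mx k.

Definition psi_inv k : cantor D :=
  if k 0 == mx then (if k 1 == z then ccons z (ccons mx (cbehead (cbehead k))) else cbehead k)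
  else ccons z k.

Definition psi_pairs : seq (word D * word D) :=
  [seq ([:: z; a], [:: a]) | a <- enum 'I_D & a != mx] ++
  [:: ([:: z; mx], [:: mx; z])] ++
  [seq ([:: a], [:: mx; a]) | a <- enum 'I_D & a != z].

Lemma psiK : cancel psi psi_inv.
Proof.
move=> k; rewrite /psi; case: (eqVneq (k 0) z) => k0; last first.
  by rewrite /psi_inv /= eqxx (negbTE k0); apply: funext.
case: (eqVneq (k 1) mx) => k1; rewrite /psi_inv /cbehead /= ?eqxx; last first.
  by rewrite (negbTE k1); apply: funext => -[|t] //=; rewrite k0.
by apply: funext => -[|[|t]] //=; rewrite ?k0 ?k1.
Qed.

Lemma psi_invK : cancel psi_inv psi.
Proof.
move=> k; rewrite /psi_inv; case: (eqVneq (k 0) mx) => k0; last first.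
  by rewrite /psi /= ?eqxx (negbTE k0); apply: funext.
case: (eqVneq (k 1) z) => k1; rewrite /psi /cbehead /= ?eqxx; last first.
  by rewrite (negbTE k1); apply: funext => -[|t] //=; rewrite k0.
by apply: funext => -[|[|t]] //=; rewrite ?k0 ?k1.
Qed.

Lemma psi_lex k1 k2 : lex_lt k1 k2 -> lex_lt (psi k1) (psi k2).
Proof.
move=> lt12; rewrite /psi; have [lt0|[eq0 lt']] := lex_lt_inv lt12.
  have k2z : k2 0 != z by rewrite -val_eqE /= -lt0n (leq_ltn_trans _ lt0).
  rewrite (negbTE k2z); case: (eqVneq (k1 0) z) => k1z; last exact: lex_lt_behead.
  case: (eqVneq (k1 1) mx) => k1mx; last exact/lex_lt_head/neq_ord_max_lt.
  by apply: lex_lt_behead => //; apply/lex_lt_head/neq_ord0_gt.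
rewrite -eq0; case: (eqVneq (k1 0) z) => k1z; last exact: lex_lt_behead.
have [lt1|[eq1 lt2]] := lex_lt_inv lt'.
  have k1mx : k1 1 != mx by rewrite -val_eqE /= neq_ltn (leq_trans lt1) // -ltnS ltn_ord.
  rewrite (negbTE k1mx); case: (eqVneq (k2 1) mx) => k2mx; last exact: lex_lt_head.
  exact/lex_lt_head/neq_ord_max_lt.
rewrite -[k2 1]eq1; case: (eqVneq (k1 1) mx) => k1mx //.
by apply: lex_lt_behead => //; apply: lex_lt_behead.
Qed.

Lemma prefix_replacement_psi : prefix_replacement psi_pairs psi.
Proof.
split.
- move=> k; rewrite /psi_pairs !map_cat !count_cat -!map_comp !count_map.
  rewrite (@count_pred_letter_filter _ _ _ (k 1)); last first.
    by move=> a /=; rewrite !incone_cons => /and3P [_ /eqP].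
  rewrite (@count_pred_letter_filter _ _ _ (k 0)); last first.
    by move=> a /=; rewrite !incone_cons => /andP [/eqP].
  rewrite /= !incone_cons /cbehead /= !eqxx !andbT.
  case: (eqVneq (k 0) z) => _ /=; last by [].
  by case: (eqVneq (k 1) mx).
- move=> k; rewrite /psi_pairs !map_cat !count_cat -!map_comp !count_map.
  rewrite (@count_pred_letter_filter _ _ _ (k 0)); last first.
    by move=> a /=; rewrite !incone_cons => /andP [/eqP].
  rewrite (@count_pred_letter_filter _ _ _ (k 1)); last first.
    by move=> a /=; rewrite !incone_cons => /and3P [_ /eqP].
  rewrite /= !incone_cons /cbehead /= !eqxx !andbT.
  case: (eqVneq (k 0) mx) => _ /=; last by [].
  by case: (eqVneq (k 1) z).
move=> pq + k; rewrite !mem_cat => /or3P [/mapP [a + ->] | | /mapP [a + ->]].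
- by rewrite mem_filter => /andP [amx _]; rewrite !hcone_cons hcone_nil /psi /= (negbTE amx).
- by rewrite mem_seq1 => /eqP -> /=; rewrite !hcone_cons hcone_nil /psi /= eqxx.
- by rewrite mem_filter => /andP [az _]; rewrite !hcone_cons hcone_nil /psi (negbTE az).
Qed.

Lemma on_cone_psi_inj u : injective (fun t => on_cone (u ++ nseq t z) psi).
Proof.
suff lt_neq a b : a < b -> on_cone (u ++ nseq a z) psi <> on_cone (u ++ nseq b z) psi.
  move=> a b ab; case: (ltngtP a b) => // lt_ab; first by case: (lt_neq _ _ lt_ab ab).
  by case: (lt_neq _ _ lt_ab (esym ab)).
move=> /subnKC <- ab; pose q : cantor D := ccons mx (fun _ => z).
have /(congr1 (@^~ 1)) : psi q = q.
  apply: (@hcone_inj _ (u ++ nseq a z)); rewrite -on_cone_hcone ab on_cone_out //.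
  by rewrite addSnnS nseqD catA incone_hcone_cat incone_cons.
by rewrite /psi /q /= => /(congr1 val).
Qed.

Lemma infinite_F_conjugates (G : (word D -> word D) -> Prop) (x : cantor D -> cantor D) u :
  G id -> injective x -> (forall p, incone u p -> ~~ incone u (x p)) ->
  infinite_set (F_conjugates G x).
Proof.
move=> Gid x_inj xu.
pose f t := on_cone (u ++ nseq t z) psi.
pose f_inv t := on_cone (u ++ nseq t z) psi_inv.
have fK t : cancel (f t) (f_inv t) by apply: on_cone_can psiK.
have f_invK t : cancel (f_inv t) (f t) by apply: on_cone_can psi_invK.
apply: (@infinite_set_inj _ _ (fun t => f t \o x \o f_inv t)) => [a b /= ab | t].
  have f_inv_ab : f_inv a = f_inv b := on_cone_conj_eq x_inj xu ab.
  apply: on_cone_psi_inj; apply: funext.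
  by apply: (bij_can_eq (Bijective (f_invK a) (fK a)) (f_invK a)); rewrite f_inv_ab.
exists (f t), (f_inv t); split => //.
exact: in_F_on_cone Gid prefix_replacement_psi psi_lex.
Qed.

End Generator.

Theorem mainTheorem10 (d : nat) (hd : 2 <= d) (G : (word d -> word d) -> Prop) :
  self_similar G ->
  forall x : cantor d -> cantor d,
    in_V G x -> x <> id -> infinite_set (F_conjugates G x).
Proof.
case: d hd G => [|[|n]] // _ G [[G_aut [Gid _]] _] x [m [wp [wm [j [g Vx]]]]] x_neq_id.
have g_aut i : tree_aut (g i) by apply: G_aut; case: Vx => _ [_ [_ [Gg _]]].
have [u xu] := continuous_displaces_cone (V_data_continuous Vx) x_neq_id.
exact: infinite_F_conjugates Gid (V_data_inj Vx g_aut) xu.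
Qed.
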